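(* Let $n\geq 2$, $m_*<m<1$, $c>0$, let $\omega\in\mathbb{R}^n$ be a unit vector and $a:=c\omega$. Define \[ \varphi(y):=A\,(|a||y|+a\cdot y)^{-\frac{1}{1-m}},\qquad A:=\left(\frac{(n-1)m}{1-m}\left(m-\frac{n-3}{n-1}\right)\right)^{\frac{1}{1-m}}, \] for $y\in\mathbb{R}^n\setminus\{-\lambda\omega;\lambda\geq 0\}$. Then on this set \[ \Delta\varphi^m=-a\cdot\nabla\varphi=\frac{A}{1-m}\frac{|a|}{|y|}(|a||y|+a\cdot y)^{-\frac{1}{1-m}}\geq 0, \] so $\varphi$ is a stationary solution of $v_t=\Delta v^m+a\cdot\nabla v$; consequently $u(x,t):=\varphi(x-ta)$ solves $u_t=\Delta u^m$ for $x\notin\{s\omega;-\infty<s\leq ct\}$, and is singular on that set. Moreover, for every $0<\gamma<1$, $(1+\gamma)\varphi(x-ta)$ is a super-solution and $(1-\gamma)\varphi(x-ta)$ is a sub-solution of $u_t=\Delta u^m$ on the same set.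
   Context: $m_*:=0$ if $n=2$ and $m_*:=\frac{n-3}{n-1}$ if $n\geq 3$. Super-/sub-solution means $u_t\geq\Delta u^m$ (resp. $\leq$) pointwise. *)

From HB Require Import structures.
From mathcomp Require Import all_boot all_order all_algebra.
From mathcomp Require Import all_classical all_reals all_analysis.
Set Implicit Arguments. Unset Strict Implicit. Unset Printing Implicit Defensive.
Import Order.TTheory GRing.Theory Num.Theory.
Import numFieldNormedType.Exports.
Local Open Scope classical_set_scope.
Local Open Scope ring_scope.

Section Defs.
Context {R : realType}.

Definition dot n (x y : 'rV[R]_n) : R := \sum_(i < n) x 0 i * y 0 i.
Definition enorm n (x : 'rV[R]_n) : R := Num.sqrt (dot x x).

Definition ev n (i : 'I_n) : 'rV[R]_n := delta_mx 0 i.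

Definition grad n (f : 'rV[R]_n -> R) (x : 'rV[R]_n) : 'rV[R]_n :=
  \row_(i < n) 'D_(ev i) f x.
Definition lap n (f : 'rV[R]_n -> R) (x : 'rV[R]_n) : R :=
  \sum_(i < n) 'D_(ev i) ('D_(ev i) f) x.

(* f has first partials near x and second pure partials at x,
   so that [lap f x] is the classical Laplacian *)
Definition lap_ok n (f : 'rV[R]_n -> R) (x : 'rV[R]_n) : Prop :=
  forall i : 'I_n, (\forall z \near x, derivable f z (ev i)) /\
                   derivable ('D_(ev i) f) x (ev i).

Definition mstar (n : nat) : R :=
  if n == 2%N then 0 else (n%:R - 3) / (n%:R - 1).

Definition Aconst (n : nat) (m : R) : R :=
  ((n%:R - 1) * m / (1 - m) * (m - (n%:R - 3) / (n%:R - 1))) `^ (1 / (1 - m)).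

Definition phi_fun n (m : R) (a : 'rV[R]_n) (y : 'rV[R]_n) : R :=
  Aconst n m * (enorm a * enorm y + dot a y) `^ (- (1 / (1 - m))).

Definition pme_sol n (m : R) (u : 'rV[R]_n -> R -> R) x t : Prop :=
  derivable (fun s : R => u x s) t 1 /\ lap_ok (fun z => u z t `^ m) x /\
  'D_1 (fun s : R => u x s) t = lap (fun z => u z t `^ m) x.
Definition pme_super n (m : R) (u : 'rV[R]_n -> R -> R) x t : Prop :=
  derivable (fun s : R => u x s) t 1 /\ lap_ok (fun z => u z t `^ m) x /\
  'D_1 (fun s : R => u x s) t >= lap (fun z => u z t `^ m) x.
Definition pme_sub n (m : R) (u : 'rV[R]_n -> R -> R) x t : Prop :=
  derivable (fun s : R => u x s) t 1 /\ lap_ok (fun z => u z t `^ m) x /\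
  'D_1 (fun s : R => u x s) t <= lap (fun z => u z t `^ m) x.
End Defs.

From HB Require Import structures.
From mathcomp Require Import all_boot all_order all_algebra.
From mathcomp Require Import all_classical all_reals all_analysis.
From mathcomp Require Import ring lra.
Import Order.TTheory GRing.Theory Num.Theory.
Import numFieldNormedType.Exports.
Local Open Scope classical_set_scope.
Local Open Scope ring_scope.

(* Write [G y = |a| |y| + a . y]; it is positive off the ray [-R_+ a] and vanishes
   on it, and [phi = A G^(-1/(1-m))].  For every power one computes
   [lap (k G^e) = k e G^(e-1) (|a|/|y|) (2(e-1) + n - 1)] from
   [sum_i (d_i G)^2 = 2 (|a|/|y|) G] and [sum_i d_i^2 G = (n-1) |a|/|y|], while
   [a . grad G = (|a|/|y|) G].  For [phi^m = A^m G^e] with [e = -m/(1-m)] the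
   choice of [A] makes both expressions equal, so [phi] is a stationary solution
   of [v_t = lap v^m + a . grad v] and [u(x,t) = phi(x - t a)] solves the porous
   medium equation with [u_t = - a . grad phi].  Multiplying [u] by [k] scales
   [u_t] by [k] and [lap u^m] by [k^m], and [k^m <= k] exactly when [k >= 1];
   this gives the super- and sub-solutions.  Near the ray [G -> 0], so [u] blows up. *)

Section DirectionalDerivative.
Context {R : realType} {V : normedModType R}.
Implicit Types (f : V -> R) (x v : V).

Lemma derive_along_line f x v : 'D_v f x = 'D_1 (fun h : R => f (h *: v + x)) 0.
Proof.
rewrite /derive; set g1 := fun h => h^-1 *: _; set g2 := fun h => h^-1 *: _.
suff -> : g1 = g2 by [].
by apply/funext => h; rewrite /g1 /g2 /= addr0 scale0r add0r [_%:A]mulr1.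
Qed.

Lemma is_derive_along_line f x v df :
  is_derive x v f df <-> is_derive (0 : R) 1 (fun h : R => f (h *: v + x)) df.
Proof.
split=> -[fd <-]; apply: DeriveDef.
- exact: (iffLR (derivable1P _ _ _) fd).
- by rewrite derive_along_line.
- exact: (iffRL (derivable1P _ _ _) fd).
- by rewrite derive_along_line.
Qed.

Lemma is_derive_comp_real {f} {g : R -> R} {x v df dg} :
  is_derive x v f df -> is_derive (f x) 1 g dg -> is_derive x v (g \o f) (dg * df).
Proof.
move=> /is_derive_along_line fd gd; apply/is_derive_along_line.
apply: (is_derive1_comp (g := fun h : R => f (h *: v + x))) => //.
by rewrite scale0r add0r.
Qed.

Lemma derive_translate f b v z : 'D_v (fun y => f (y + b)) z = 'D_v f (z + b).
Proof.
rewrite derive_along_line [RHS]derive_along_line /=.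
by under eq_fun do rewrite -addrA.
Qed.

Lemma derivable_translate f b v z :
  derivable f (z + b) v -> derivable (fun y => f (y + b)) z v.
Proof.
move=> /derivable1P fd; apply/derivable1P.
rewrite (_ : (fun h : R => _) = (fun h : R => f (h *: v + (z + b)))) //.
by apply/funext => h; rewrite addrA.
Qed.

Lemma is_deriveM_real {f g x v df dg} : is_derive x v f df -> is_derive x v g dg ->
  is_derive x v (fun z => f z * g z) (df * g x + f x * dg).
Proof.
move=> fd gd; eapply is_derive_eq; first exact (is_deriveM fd gd).
by rewrite addrC; congr (_ + _); rewrite mulrC.
Qed.

Lemma is_deriveZ_real k {f x v df} : is_derive x v f df ->
  is_derive x v (fun z => k * f z) (k * df).
Proof. by move=> fd; eapply is_derive_eq; first exact (is_deriveZ k fd). Qed.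

Lemma near_deriveZ_real k {f x v} : (\forall y \near x, derivable f y v) ->
  \forall y \near x, k * 'D_v f y = 'D_v (fun z => k * f z) y.
Proof. by apply: filterS => y /derivableP/(is_deriveZ_real k) []. Qed.

Lemma is_derive_inv {f x v df} : f x != 0 -> is_derive x v f df ->
  is_derive x v (fun z => (f z)^-1) (- (f x) ^- 2 * df).
Proof. by move=> fx0 [fd <-]; apply: DeriveDef; [exact: derivableV | exact: deriveV]. Qed.

End DirectionalDerivative.

Lemma is_derive_comp_subZ {R : realType} {V : normedModType R} (f : V -> R) x b t df :
  is_derive (x - t *: b) (- b) f df -> is_derive t 1 (fun s : R => f (x - s *: b)) df.
Proof.
move=> /is_derive_along_line fd; apply/is_derive_along_line.
rewrite (_ : (fun h : R => _) = (fun h : R => f (h *: - b + (x - t *: b)))) //.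
apply/funext => h; congr f.
by rewrite [_%:A]mulr1 scalerDl scalerN opprD addrCA.
Qed.

Section Euclid.
Context {R : realType} {n : nat}.
Implicit Types (x y z : 'rV[R]_n) (k : R).

Lemma dotC x y : dot x y = dot y x.
Proof. by apply: eq_bigr => i _; rewrite mulrC. Qed.

Lemma dotDr x y z : dot x (y + z) = dot x y + dot x z.
Proof. by rewrite /dot -big_split; apply: eq_bigr => i _; rewrite mxE mulrDr. Qed.

Lemma dotZr x k y : dot x (k *: y) = k * dot x y.
Proof. by rewrite /dot mulr_sumr; apply: eq_bigr => i _; rewrite mxE mulrCA. Qed.

Lemma dotDl x y z : dot (x + y) z = dot x z + dot y z.
Proof. by rewrite dotC dotDr !(dotC z). Qed.

Lemma dotZl x k y : dot (k *: x) y = k * dot x y.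
Proof. by rewrite dotC dotZr dotC. Qed.

Lemma dotNr x y : dot x (- y) = - dot x y.
Proof. by rewrite -scaleN1r dotZr mulN1r. Qed.

Lemma dot0r x : dot x 0 = 0.
Proof. by rewrite -(scale0r 0) dotZr mul0r. Qed.

Lemma dot_ev x i : dot x (ev i) = x 0 i.
Proof.
rewrite /dot (bigD1 i) //= big1 ?addr0 => [|j ji]; rewrite /ev mxE.
  by rewrite !eqxx mulr1.
by rewrite (negbTE ji) andbF mulr0.
Qed.

Lemma dot_self_ge0 x : 0 <= dot x x.
Proof. by apply: sumr_ge0 => i _; rewrite -expr2 sqr_ge0. Qed.

Lemma dot_self_eq0 x : (dot x x == 0) = (x == 0).
Proof.
apply/idP/eqP => [|->]; last by rewrite dot0r.
rewrite psumr_eq0 => [/allP x0|i _]; last by rewrite -expr2 sqr_ge0.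
apply/rowP => i; rewrite mxE; apply/eqP.
by rewrite -sqrf_eq0 expr2; apply: x0 (mem_index_enum _).
Qed.

Lemma enorm_ge0 x : 0 <= enorm x.
Proof. exact: sqrtr_ge0. Qed.

Lemma enorm_sqr x : enorm x ^+ 2 = dot x x.
Proof. by rewrite sqr_sqrtr // dot_self_ge0. Qed.

Lemma enorm_gt0 {x} : x != 0 -> 0 < enorm x.
Proof. by move=> x0; rewrite sqrtr_gt0 lt_def dot_self_ge0 dot_self_eq0 x0. Qed.

Lemma enorm0 : enorm (0 : 'rV[R]_n) = 0.
Proof. by rewrite /enorm dot0r sqrtr0. Qed.

Lemma enormZ k x : enorm (k *: x) = `|k| * enorm x.
Proof. by rewrite /enorm dotZl dotZr mulrA -expr2 sqrtrM ?sqr_ge0 // sqrtr_sqr. Qed.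

Lemma dot_ev_self (i : 'I_n) : dot (ev i) (ev i) = 1 :> R.
Proof. by rewrite dot_ev /ev mxE !eqxx. Qed.

Lemma sum_dot_ev_sqr x : \sum_(i < n) dot x (ev i) ^+ 2 = dot x x.
Proof. by apply: eq_bigr => i _; rewrite dot_ev expr2. Qed.

Lemma sum_coord_sqr_enorm x : x != 0 -> \sum_(i < n) (x 0 i / enorm x) ^+ 2 = 1.
Proof.
move=> /enorm_gt0/lt0r_neq0 x0.
under eq_bigr do rewrite expr_div_n -dot_ev.
by rewrite -mulr_suml sum_dot_ev_sqr -enorm_sqr divff // expf_neq0.
Qed.

End Euclid.

Section EuclidCalculus.
Context {R : realType} {n : nat}.
Implicit Types (b v y z : 'rV[R]_n).

Lemma is_derive_dotr b z v : is_derive z v (dot b) (dot b v).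
Proof.
apply/is_derive_along_line.
have -> : (fun h : R => dot b (h *: v + z)) = horner ('X * (dot b v)%:P + (dot b z)%:P).
  by apply/funext => h; rewrite !hornerE dotDr dotZr.
by apply: is_derive_eq (is_derive_poly _ _) _; rewrite !poly.derivE !hornerE.
Qed.

Lemma is_derive_dot_self z v : is_derive z v (fun y => dot y y) (2 * dot z v).
Proof.
apply/is_derive_along_line.
have -> : (fun h : R => dot (h *: v + z) (h *: v + z)) =
    horner ('X * ('X * (dot v v)%:P + (2 * dot z v)%:P) + (dot z z)%:P).
  apply/funext => h; rewrite !hornerE !dotDl !dotDr !dotZl !dotZr (dotC v z).
  ring.
by apply: is_derive_eq (is_derive_poly _ _) _; rewrite !poly.derivE !hornerE; ring.
Qed.

Lemma is_derive_enorm z v : z != 0 -> is_derive z v (@enorm R n) (dot z v / enorm z).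
Proof.
move=> z0; have zz : 0 < dot z z by rewrite -enorm_sqr exprn_gt0 ?enorm_gt0.
apply: is_derive_eq (is_derive_comp_real (is_derive_dot_self z v) (is_derive1_sqrt zz)) _.
have := enorm_gt0 z0; rewrite -/(enorm z) => /lt0r_neq0 ?.
by field.
Qed.

Lemma continuous_dotr b : continuous (dot b).
Proof.
move=> z; apply: differentiable_continuous.
rewrite (_ : dot b = \sum_(i < n) (fun y => b 0 i * y 0 i)); last first.
  by rewrite fct_sumE; apply/funext.
apply: differentiable_sum => i.
by apply: differentiableM; [exact: differentiable_cst | exact: differentiable_coord].
Qed.

Lemma continuous_enorm : continuous (@enorm R n).
Proof.
move=> z; apply: continuous_comp; last exact: sqrt_continuous.
apply: differentiable_continuous.
rewrite (_ : (fun y => dot y y) = \sum_(i < n) (fun y => y 0 i * y 0 i)); last first.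
  by rewrite fct_sumE; apply/funext.
apply: differentiable_sum => i.
by apply: differentiableM; exact: differentiable_coord.
Qed.

End EuclidCalculus.

Section Profile.
Context {R : realType} {n : nat} (a : 'rV[R]_n).
Implicit Types (b v y z : 'rV[R]_n).

Definition profile y := enorm a * enorm y + dot a y.
Definition profile_slope y v := enorm a * (dot y v / enorm y) + dot a v.

Lemma profile_gt0_neq0 {y} : 0 < profile y -> y != 0.
Proof. by apply: contraTneq => ->; rewrite /profile enorm0 dot0r mulr0 addr0 ltxx. Qed.

Lemma continuous_profile : continuous profile.
Proof.
move=> y; apply: (continuousD (f := fun z => enorm a * enorm z) (g := dot a)).
  exact: (continuousZl_tmp (k := enorm a) (continuous_enorm y)).
exact: continuous_dotr.
Qed.

Lemma near_profile_gt0 y : 0 < profile y -> \forall z \near y, 0 < profile z.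
Proof. exact: (@cvgr_gt R _ _ (nbhs_filter y) profile _ (continuous_profile y) 0). Qed.

Lemma is_derive_profile y v : y != 0 -> is_derive y v profile (profile_slope y v).
Proof.
move=> y0; apply: is_deriveD (is_derive_dotr a y v).
exact: is_deriveZ_real (is_derive_enorm y v y0).
Qed.

Lemma profile_slopeE y v : profile_slope y v = dot ((enorm a / enorm y) *: y + a) v.
Proof. by rewrite /profile_slope dotDl dotZl mulrA mulrAC. Qed.

Lemma profile_slopeN y v : profile_slope y (- v) = - profile_slope y v.
Proof. by rewrite !profile_slopeE dotNr. Qed.

Lemma profile_slope_self y : y != 0 -> profile_slope y a = enorm a / enorm y * profile y.
Proof.
move=> /enorm_gt0/lt0r_neq0 y0.
by rewrite /profile_slope /profile -enorm_sqr (dotC y a); field.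
Qed.

Lemma sum_profile_slope_sqr y : y != 0 ->
  \sum_(i < n) profile_slope y (ev i) ^+ 2 = 2 * (enorm a / enorm y) * profile y.
Proof.
move=> /enorm_gt0/lt0r_neq0 y0.
under eq_bigr do rewrite profile_slopeE.
rewrite sum_dot_ev_sqr !dotDl !dotDr !dotZl !dotZr -!enorm_sqr (dotC y a) /profile.
by field.
Qed.

Lemma is_derive_profile_slope y (i : 'I_n) : y != 0 ->
  is_derive y (ev i) (fun z => profile_slope z (ev i))
    (enorm a / enorm y * (1 - (y 0 i / enorm y) ^+ 2)).
Proof.
move=> y0; have /lt0r_neq0 ny0 := enorm_gt0 y0.
have dquot := is_deriveM_real (is_derive_dotr (ev i) y (ev i))
  (is_derive_inv ny0 (is_derive_enorm y (ev i) y0)).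
have -> : (fun z => profile_slope z (ev i)) =
    (fun z => enorm a * (dot (ev i) z * (enorm z)^-1) + dot a (ev i)).
  by apply/funext => z; rewrite /profile_slope dotC.
apply: is_derive_eq (is_deriveD (is_deriveZ_real (enorm a) dquot) (is_derive_cst _ _ _)) _.
by rewrite dotC dot_ev_self dot_ev addr0; field.
Qed.

End Profile.

Lemma powRB1 {R : realType} (x r : R) : 0 < x -> x `^ (r - 1) = x `^ r / x.
Proof. by move=> x0; rewrite powRB ?powRr1 ?ltW ?lt0r_neq0 ?implybT. Qed.

Section ProfilePower.
Context {R : realType} {n : nat} (a : 'rV[R]_n).
Implicit Types (k e : R) (v y z : 'rV[R]_n).

Lemma is_derive_profile_pow k e y v : 0 < profile a y ->
  is_derive y v (fun z => k * profile a z `^ e)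
    (k * e * profile a y `^ (e - 1) * profile_slope a y v).
Proof.
move=> Gy; rewrite -!mulrA; apply: is_deriveZ_real; rewrite mulrA.
exact (is_derive_comp_real (is_derive_profile a y v (profile_gt0_neq0 a Gy))
  (is_derive1_powR e Gy)).
Qed.

Lemma grad_profile_pow k e y : 0 < profile a y ->
  grad (fun z => k * profile a z `^ e) y =
    (k * e * profile a y `^ (e - 1)) *: ((enorm a / enorm y) *: y + a).
Proof.
move=> Gy; apply/rowP => i.
by rewrite !mxE (is_derive_profile_pow k e y (ev i) Gy).(derive_val) profile_slopeE dot_ev !mxE.
Qed.

Lemma is_derive2_profile_pow k e y (i : 'I_n) : 0 < profile a y ->
  is_derive y (ev i) ('D_(ev i) (fun z => k * profile a z `^ e))
    (k * e * ((e - 1) * profile a y `^ (e - 2) * profile_slope a y (ev i) ^+ 2 +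
      profile a y `^ (e - 1) * (enorm a / enorm y * (1 - (y 0 i / enorm y) ^+ 2)))).
Proof.
move=> Gy.
have DF : \forall z \near y,
    k * e * profile a z `^ (e - 1) * profile_slope a z (ev i) =
    'D_(ev i) (fun z => k * profile a z `^ e) z.
  near=> z; have Gz : 0 < profile a z by near: z; exact: near_profile_gt0.
  by rewrite (is_derive_profile_pow k e z (ev i) Gz).(derive_val).
apply: near_eq_is_derive DF _.
apply: is_derive_eq (is_deriveM_real (is_derive_profile_pow (k * e) (e - 1) y (ev i) Gy)
  (is_derive_profile_slope a y i (profile_gt0_neq0 a Gy))) _.
by rewrite (_ : e - 1 - 1 = e - 2); [rewrite expr2; ring | ring].
Unshelve. all: by end_near.
Qed.

Lemma lap_ok_profile_pow k e y : 0 < profile a y ->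
  lap_ok (fun z => k * profile a z `^ e) y.
Proof.
move=> Gy i; split; last by have [] := is_derive2_profile_pow k e y i Gy.
near=> z; have Gz : 0 < profile a z by near: z; exact: near_profile_gt0.
by have [] := is_derive_profile_pow k e z (ev i) Gz.
Unshelve. all: by end_near.
Qed.

Lemma lap_profile_pow k e y : 0 < profile a y ->
  lap (fun z => k * profile a z `^ e) y =
    k * e * profile a y `^ (e - 1) * (enorm a / enorm y) * (2 * (e - 1) + n%:R - 1).
Proof.
move=> Gy; have y0 := profile_gt0_neq0 a Gy; have /enorm_gt0/lt0r_neq0 ny0 := y0.
rewrite /lap; under eq_bigr do rewrite (is_derive2_profile_pow k e y _ Gy).(derive_val).
rewrite -mulr_sumr big_split /= -!mulr_sumr sum_profile_slope_sqr //.
rewrite sumrB sum_coord_sqr_enorm // sumr_const card_ord.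
rewrite (_ : e - 2 = e - 1 - 1) ?powRB1 //; last by ring.
by field; rewrite ny0 lt0r_neq0.
Qed.

End ProfilePower.

Section LaplacianAlgebra.
Context {R : realType} {n : nat}.
Implicit Types (f : 'rV[R]_n -> R) (b x : 'rV[R]_n).

Lemma lap_translate f b x : lap (fun y => f (y + b)) x = lap f (x + b).
Proof.
rewrite /lap; apply: eq_bigr => i _.
under [X in derive X]funext do rewrite derive_translate.
exact: (derive_translate (fun z => 'D_(ev i) f z)).
Qed.

Lemma lap_ok_translate f b x : lap_ok f (x + b) -> lap_ok (fun y => f (y + b)) x.
Proof.
move=> fok i; have [fd fdd] := fok i; split.
  rewrite (near_shift x) in fd; apply: filterS fd => z /=.
  by rewrite addrAC subrr add0r; exact: derivable_translate.
under [X in derivable X]funext do rewrite derive_translate.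
exact: (derivable_translate (fun z => 'D_(ev i) f z)).
Qed.

Lemma lap_ok_scale f k x : lap_ok f x -> lap_ok (fun y => k * f y) x.
Proof.
move=> fok i; have [fd fdd] := fok i.
split; first by apply: filterS fd => y /derivableP/(is_deriveZ_real k) [].
by have [] := near_eq_is_derive (near_deriveZ_real k fd) (is_deriveZ_real k (derivableP fdd)).
Qed.

Lemma lap_scale f k x : lap_ok f x -> lap (fun y => k * f y) x = k * lap f x.
Proof.
move=> fok; rewrite /lap mulr_sumr; apply: eq_bigr => i _; have [fd fdd] := fok i.
rewrite -(near_eq_derive _ (near_deriveZ_real k fd)).
by rewrite (is_deriveZ_real k (derivableP fdd)).(derive_val).
Qed.

End LaplacianAlgebra.

Definition Abase {R : realType} (n : nat) (m : R) : R :=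
  (n%:R - 1) * m / (1 - m) * (m - (n%:R - 3) / (n%:R - 1)).

Section Constants.
Context {R : realType} {n : nat} {m : R}.
Hypotheses (n_ge2 : (2 <= n)%N) (mstar_lt_m : mstar n < m) (m_lt1 : m < 1).

Lemma Abase_gt0 : 0 < Abase n m.
Proof.
have n1 : 1 < n%:R :> R by rewrite ltr1n.
have [m_gt0 m_gt] : 0 < m /\ (n%:R - 3) / (n%:R - 1) < m.
  move: mstar_lt_m; rewrite /mstar; case: eqP => [-> m0 | /eqP n2 m_gt]; split => //.
    by rewrite (_ : (2%:R - 3) / (2%:R - 1) = -1 :> R); [lra | rewrite -[2%:R]/(1 + 1 : R); field].
  apply: le_lt_trans m_gt; apply: divr_ge0; rewrite subr_ge0 ?(ltW n1) //.
  have n3 : (3 <= n)%N by rewrite ltn_neqAle eq_sym n2.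
  by rewrite -(ler_nat R) in n3.
by rewrite /Abase !mulr_gt0 ?invr_gt0 ?subr_gt0.
Qed.

Lemma Aconst_eq : Aconst n m = Aconst n m `^ m * Abase n m.
Proof.
have AK : Aconst n m `^ (1 - m) = Abase n m.
  by rewrite -powRrM mul1r mulVf ?subr_eq0 ?gt_eqF // powRr1 // ltW // Abase_gt0.
have A0 : Aconst n m != 0 by rewrite gt_eqF // powR_gt0 // Abase_gt0.
by rewrite -AK -powRD ?A0 ?implybT // (addrC m) subrK powRr1 // powR_ge0.
Qed.

(* [- m / (1 - m)] is the exponent of [G] in [phi^m]; the left-hand side is the
   factor that [lap_profile_pow] attaches to this exponent. *)
Lemma exponent_identity :
  - (1 / (1 - m)) * m * (2 * - (1 / (1 - m)) + n%:R - 1) = Abase n m / (1 - m).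
Proof.
have m1 : 1 - m != 0 by rewrite subr_eq0 gt_eqF.
have : n%:R - 1 != 0 :> R by rewrite subr_eq0 pnatr_eq1 gtn_eqF.
by rewrite /Abase; move: (n%:R : R) => N N1; field; rewrite m1 N1.
Qed.

End Constants.

Definition phi_drift {R : realType} {n : nat} (m : R) (a y : 'rV[R]_n) : R :=
  Aconst n m / (1 - m) * (enorm a / enorm y) * profile a y `^ (- (1 / (1 - m))).

Section StationaryProfile.
Context {R : realType} {n : nat} (m : R) (a : 'rV[R]_n).
Implicit Types (v x y : 'rV[R]_n).
Local Notation p := (1 / (1 - m)).

Lemma phi_ge0 y : 0 <= phi_fun m a y.
Proof. by rewrite mulr_ge0 ?powR_ge0. Qed.

Lemma phi_powR_m : (fun y => phi_fun m a y `^ m) =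
  (fun y => Aconst n m `^ m * profile a y `^ (- p * m)).
Proof. by apply/funext => y; rewrite powRM ?powR_ge0 // -powRrM. Qed.

Lemma phi_slope_self y : 0 < profile a y ->
  Aconst n m * - p * profile a y `^ (- p - 1) * profile_slope a y a = - phi_drift m a y.
Proof.
move=> Gy; rewrite profile_slope_self ?(profile_gt0_neq0 a Gy) //.
have /lt0r_neq0 G0 := Gy; have /enorm_gt0/lt0r_neq0 y0 := profile_gt0_neq0 a Gy.
rewrite powRB1 // /phi_drift -/(profile a y); set q := (1 - m)^-1.
by field; rewrite y0 G0.
Qed.

Lemma oppr_dot_grad_phi y : 0 < profile a y ->
  - dot a (grad (phi_fun m a) y) = phi_drift m a y.
Proof.
move=> Gy; rewrite (grad_profile_pow a _ _ y Gy) dotZr dotC -profile_slopeE.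
by apply/eqP; rewrite eqr_oppLR -(phi_slope_self y Gy).
Qed.

Lemma is_derive_phi_travel x t : 0 < profile a (x - t *: a) ->
  is_derive t 1 (fun s : R => phi_fun m a (x - s *: a)) (phi_drift m a (x - t *: a)).
Proof.
move=> Gy; apply: is_derive_comp_subZ.
apply: is_derive_eq (is_derive_profile_pow a _ _ _ (- a) Gy) _.
by rewrite profile_slopeN mulrN phi_slope_self // opprK.
Qed.

Lemma phi_drift_ge0 y : m < 1 -> 0 <= phi_drift m a y.
Proof.
move=> m1; rewrite /phi_drift !mulr_ge0 ?invr_ge0 ?powR_ge0 ?enorm_ge0 //.
by rewrite subr_ge0 ltW.
Qed.

Lemma derivable_phi y v : 0 < profile a y -> derivable (phi_fun m a) y v.
Proof. by move=> Gy; have [] := is_derive_profile_pow a (Aconst n m) (- p) y v Gy. Qed.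

Lemma lap_ok_phi_powR y : 0 < profile a y -> lap_ok (fun z => phi_fun m a z `^ m) y.
Proof. by rewrite phi_powR_m; exact: lap_ok_profile_pow. Qed.

Lemma lap_phi_powR y : (2 <= n)%N -> mstar n < m -> m < 1 -> 0 < profile a y ->
  lap (fun z => phi_fun m a z `^ m) y = phi_drift m a y.
Proof.
move=> n2 mm m1 Gy; rewrite phi_powR_m lap_profile_pow //.
rewrite (_ : - p * m - 1 = - p); last by field; rewrite subr_eq0 gt_eqF.
rewrite /phi_drift [in RHS](Aconst_eq n2 mm m1) -(mulrA _ (Abase n m)).
by rewrite -exponent_identity //; ring.
Qed.

End StationaryProfile.

Lemma cvgy_mul_powRN {R : realType} {T : Type} (F : set_system T) {FF : Filter F}
    (g : T -> R) (A q : R) :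
  0 < A -> 0 < q -> g @ F --> 0 -> (\forall z \near F, 0 < g z) ->
  A * g z `^ (- q) @[z --> F] --> +oo.
Proof.
move=> A0 q0 g0 gpos; apply/cvgryPge => M.
set M' := Num.max M 1; have M'0 : 0 < M' by rewrite lt_max ltr01 orbT.
have MM' : M <= M' by rewrite le_max lexx.
have del0 : 0 < (A / M') `^ q^-1 by rewrite powR_gt0 // divr_gt0.
near=> z; have gz : 0 < g z by near: z.
have gdel : g z < (A / M') `^ q^-1 by near: z; exact: cvgr_lt g0 _ del0.
have gq : g z `^ q < A / M'.
  rewrite -[X in _ < X](@powRr1 _ (A / M')) ?divr_ge0 ?ltW // -(mulVf (lt0r_neq0 q0)).
  by rewrite powRrM gt0_ltr_powR ?nnegrE ?powR_ge0 ?ltW.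
rewrite powRN (le_trans MM') // ler_pdivlMr ?powR_gt0 // mulrC.
by rewrite -ler_pdivlMr // ltW.
Unshelve. all: by end_near.
Qed.

Section TravellingWave.
Context {R : realType} {n : nat} {c : R} {w : 'rV[R]_n}.
Hypotheses (c_gt0 : 0 < c) (w_unit : enorm w = 1).
Implicit Types (x y : 'rV[R]_n) (l s t : R).
Local Notation a := (c *: w).

Lemma profile_scale_unit y : profile a y = c * (enorm y + dot w y).
Proof. by rewrite /profile enormZ w_unit mulr1 gtr0_norm // dotZl mulrDr. Qed.

Lemma profile_ray_eq0 l : 0 <= l -> profile a (- (l *: w)) = 0.
Proof.
move=> l0; rewrite profile_scale_unit -scaleNr enormZ dotZr w_unit.
by rewrite -enorm_sqr w_unit expr1n normrN ger0_norm // !mulr1 addrN mulr0.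
Qed.

Lemma profile_gt0_off_ray {y} : ~ (exists l, 0 <= l /\ y = - (l *: w)) -> 0 < profile a y.
Proof.
move=> off_ray; rewrite profile_scale_unit pmulr_rgt0 // ltNge; apply/negP => y_le.
apply: off_ray; exists (enorm y); split; first exact: enorm_ge0.
(* If [|y| + w . y <= 0], then [y + |y| w] has nonpositive squared length. *)
have : dot (y + enorm y *: w) (y + enorm y *: w) = 2 * enorm y * (enorm y + dot w y).
  rewrite !dotDl !dotDr !dotZl !dotZr -(enorm_sqr w) w_unit -(enorm_sqr y) (dotC y w); ring.
have := enorm_ge0 y; have := dot_self_ge0 (y + enorm y *: w).
move=> sq_ge0 ny_ge0 sqE; have /eqP : dot (y + enorm y *: w) (y + enorm y *: w) = 0 by nra.
by rewrite dot_self_eq0 addr_eq0 => /eqP.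
Qed.

Lemma wave_profile_gt0 {x t} : ~ (exists s, s <= c * t /\ x = s *: w) ->
  0 < profile a (x - t *: a).
Proof.
move=> off_S; apply: profile_gt0_off_ray => -[l [l0 xE]]; apply: off_S.
exists (c * t - l); split; first by lra.
by rewrite -(subrK (t *: a) x) xE scalerA scalerBl addrC mulrC.
Qed.

Lemma wave_profile_eq0 {x t} : (exists s, s <= c * t /\ x = s *: w) ->
  profile a (x - t *: a) = 0.
Proof.
move=> [s [st ->]]; rewrite (_ : s *: w - t *: a = - ((c * t - s) *: w)).
  by rewrite profile_ray_eq0 // subr_ge0.
by rewrite scalerBl opprB scalerA mulrC.
Qed.

End TravellingWave.

Section PorousMediumWave.
Context {R : realType} {n : nat} (m c : R) (w : 'rV[R]_n).
Hypotheses (n_ge2 : (2 <= n)%N) (mstar_lt_m : mstar n < m) (m_lt1 : m < 1).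
Hypotheses (c_gt0 : 0 < c) (w_unit : enorm w = 1).
Implicit Types (x : 'rV[R]_n) (k t : R).
Local Notation a := (c *: w).
Local Notation u := (fun x t => phi_fun m a (x - t *: a)).
Local Notation S := (fun t => [set x | exists s, s <= c * t /\ x = s *: w]).

Lemma lap_ok_wave x t : ~ S t x -> lap_ok (fun z => u z t `^ m) x.
Proof.
move=> off_S; apply: (lap_ok_translate (fun y => phi_fun m a y `^ m)).
exact/lap_ok_phi_powR/wave_profile_gt0.
Qed.

Lemma lap_wave x t : ~ S t x -> lap (fun z => u z t `^ m) x = phi_drift m a (x - t *: a).
Proof.
move=> off_S; rewrite (lap_translate (fun y => phi_fun m a y `^ m)).
exact/lap_phi_powR/wave_profile_gt0.
Qed.

Lemma is_derive_wave x t : ~ S t x ->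
  is_derive t 1 (fun s => u x s) (phi_drift m a (x - t *: a)).
Proof. by move=> off_S; apply/is_derive_phi_travel/wave_profile_gt0. Qed.

Lemma pme_sol_wave x t : ~ S t x -> pme_sol m u x t.
Proof.
move=> off_S; have [dt Dt] := is_derive_wave x t off_S.
by split=> //; split; [exact: lap_ok_wave | rewrite Dt lap_wave].
Qed.

Lemma pme_scaled_wave {k x t} : 0 <= k -> ~ S t x ->
  [/\ derivable (fun s => k * u x s) t 1, lap_ok (fun z => (k * u z t) `^ m) x,
      'D_1 (fun s => k * u x s) t = k * phi_drift m a (x - t *: a) &
      lap (fun z => (k * u z t) `^ m) x = k `^ m * phi_drift m a (x - t *: a)].
Proof.
move=> k0 off_S.
have -> : (fun z => (k * u z t) `^ m) = (fun z => k `^ m * u z t `^ m).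
  by apply/funext => z; rewrite powRM ?phi_ge0.
have [dt Dt] := is_deriveZ_real k (is_derive_wave x t off_S).
split=> //; first exact/lap_ok_scale/lap_ok_wave.
by rewrite lap_scale ?lap_wave //; exact: lap_ok_wave.
Qed.

Lemma pme_super_wave gam x t : 0 < gam -> ~ S t x ->
  pme_super m (fun z s => (1 + gam) * u z s) x t.
Proof.
move=> gam0 off_S; have k0 : 0 <= 1 + gam by rewrite addr_ge0 // ltW.
rewrite /pme_super; have [dt ok -> ->] := pme_scaled_wave k0 off_S; split=> //; split=> //.
by rewrite ler_wpM2r ?phi_drift_ge0 // ler1_powR ?lerDl ?ltW.
Qed.

Lemma pme_sub_wave gam x t : 0 < gam < 1 -> ~ S t x ->
  pme_sub m (fun z s => (1 - gam) * u z s) x t.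
Proof.
move=> /andP[gam0 gam1] off_S; have k0 : 0 <= 1 - gam by rewrite subr_ge0 ltW.
rewrite /pme_sub; have [dt ok -> ->] := pme_scaled_wave k0 off_S; split=> //; split=> //.
rewrite ler_wpM2r ?phi_drift_ge0 //; apply: ger1_powR; last exact: ltW.
by rewrite subr_gt0 gam1 gerBl ltW.
Qed.

Lemma wave_blowup x t : S t x -> u z t @[z --> within (~` S t) (nbhs x)] --> +oo.
Proof.
move=> on_S; have G0 := wave_profile_eq0 c_gt0 w_unit on_S.
have Gcont : profile a (z - t *: a) @[z --> x] --> profile a (x - t *: a).
  exact: continuous_comp (cvgD cvg_id (cvg_cst _)) (continuous_profile a _).
apply: (cvgy_mul_powRN _ (fun z => profile a (z - t *: a))).
- by rewrite powR_gt0 // Abase_gt0.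
- by rewrite divr_gt0 // subr_gt0.
- by rewrite -G0; exact: cvg_within_filter.
- by rewrite near_withinE; near=> z => off_S; exact: wave_profile_gt0.
Unshelve. all: by end_near.
Qed.

End PorousMediumWave.

Theorem mainTheorem2 (R : realType) (n : nat) (m c : R) (w : 'rV[R]_n) :
  (2 <= n)%N -> @mstar R n < m -> m < 1 -> 0 < c -> enorm w = 1 ->
  let a := c *: w in
  let phi := phi_fun m a in
  let D := [set y : 'rV[R]_n | ~ exists l : R, 0 <= l /\ y = - (l *: w)] in
  let u := fun (x : 'rV[R]_n) (t : R) => phi (x - t *: a) in
  let S := fun t : R => [set x : 'rV[R]_n | exists s : R, s <= c * t /\ x = s *: w] in
  (forall y, D y ->
     (forall i : 'I_n, derivable phi y (ev i)) /\
     lap_ok (fun z => phi z `^ m) y /\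
     lap (fun z => phi z `^ m) y = - dot a (grad phi y) /\
     - dot a (grad phi y) =
       Aconst n m / (1 - m) * (enorm a / enorm y) *
         (enorm a * enorm y + dot a y) `^ (- (1 / (1 - m))) /\
     0 <= Aconst n m / (1 - m) * (enorm a / enorm y) *
         (enorm a * enorm y + dot a y) `^ (- (1 / (1 - m)))) /\
  (forall y, D y -> 0 = lap (fun z => phi z `^ m) y + dot a (grad phi y)) /\
  (forall x t, ~ S t x -> pme_sol m u x t) /\
  (forall x t, S t x -> u z t @[z --> within (~` S t) (nbhs x)] --> +oo) /\
  (forall gam : R, 0 < gam < 1 -> forall x t, ~ S t x ->
     pme_super m (fun z s => (1 + gam) * u z s) x t /\
     pme_sub m (fun z s => (1 - gam) * u z s) x t).
Proof.
move=> n2 mm m1 c0 w1 a phi D u S.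
have lap_grad y : D y -> lap (fun z => phi z `^ m) y = - dot a (grad phi y).
  by move=> /(profile_gt0_off_ray c0 w1) Gy; rewrite lap_phi_powR // oppr_dot_grad_phi.
split.
  move=> y Dy; have Gy := profile_gt0_off_ray c0 w1 Dy.
  split; first by move=> i; exact: derivable_phi.
  split; first exact: lap_ok_phi_powR.
  split; first exact: lap_grad.
  by split; [exact: oppr_dot_grad_phi | exact: phi_drift_ge0].
split; first by move=> y Dy; rewrite lap_grad // addNr.
split; first by move=> x t; exact: pme_sol_wave.
split; first by move=> x t; exact: wave_blowup.
move=> gam gam01 x t off_S; have /andP[gam0 _] := gam01.
by split; [exact: pme_super_wave | exact: pme_sub_wave].
Qed.
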